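(* Let $M\models\mathrm{AA}_0$ and $x,y\in M$. Then $x\le y$ if and only if there exists $t\in M$ such that $x+t=y$; moreover such $t$ is unique.
   Context: Structures are complete metric spaces of diameter at most $1$ in $L=\{+,\cdot,\wedge,\vee,0,1\}$ (operations $1$-Lipschitz, $d$ the only relation symbol); affine conditions use formulas built from $1$ and $d(t_1,t_2)$ via $+$, real scalar multiples, $\sup$, $\inf$, free variables universally quantified. $|x|=d(x,0)$; $x\le y$ means $x\wedge y=x$; $nx$, $x^n$ iterated sum/product. $\mathrm{AA}_0$ consists of: (A1) the identities of the nonnegative part of a lattice-ordered commutative ring with identity (commutative semiring axioms, lattice axioms, distributivity of $+,\cdot$ over $\wedge,\vee$, $0\le x$); (A2) $\inf_y d(x,(x\wedge y)+1)=1-|x|$ and $x\le x^2$; (A3) $d(x+z,y+z)=d(x,y)$; (A4) $d(y,z)\le d(xy,xz)+1-|x|$; (A5) $d(xy,xz)=d(x^ny,x^nz)\le d(y,z)$; (A6) $d(nx,ny)=d(x^n,y^n)=d(x,y)$, $n\ge1$; (A7) $|x\wedge y|+|x\vee y|=|x|+|y|$; (A8) $|xy+z|=|(x\wedge y)+z|$; (A9) $|x+y+z|=|(x\vee y)+z|$; (A10) $\inf_t d((x\wedge y)+t,y)=0$. *)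

From Stdlib Require Import Reals.
Open Scope R_scope.

Record LStruct : Type := {
  car :> Type;
  dist : car -> car -> R;
  add : car -> car -> car;
  mul : car -> car -> car;
  meet : car -> car -> car;
  join : car -> car -> car;
  zero : car;
  one : car
}.

Arguments dist {_}. Arguments add {_}. Arguments mul {_}.
Arguments meet {_}. Arguments join {_}. Arguments zero {_}. Arguments one {_}.

Section Defs.
Variable M : LStruct.

Definition nrm (x : M) : R := dist x zero.

Definition le (x y : M) : Prop := meet x y = x.

(* n x and x^n: iterated sum / product (used only for n >= 1) *)
Fixpoint nsum (n : nat) (x : M) : M :=
  match n with O => zero | S O => x | S k => add x (nsum k x) end.
Fixpoint npow (n : nat) (x : M) : M :=
  match n with O => one | S O => x | S k => mul x (npow k x) end.

Definition is_inf (f : M -> R) (a : R) : Prop :=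
  (forall (y : M), a <= f y) /\ (forall e : R, 0 < e -> exists y, f y < a + e).

Definition cauchy (u : nat -> M) : Prop :=
  forall e : R, 0 < e -> exists N, forall m n : nat, (N <= m)%nat -> (N <= n)%nat ->
    dist (u m) (u n) < e.
Definition converges (u : nat -> M) : Prop :=
  exists l, forall e : R, 0 < e -> exists N, forall n : nat, (N <= n)%nat -> dist (u n) l < e.

Definition complete_metric_diam1 : Prop :=
  (forall (x : M) (y : M), 0 <= dist x y) /\
  (forall (x : M) (y : M), dist x y = 0 <-> x = y) /\
  (forall (x : M) (y : M), dist x y = dist y x) /\
  (forall (x : M) (y : M) (z : M), dist x z <= dist x y + dist y z) /\
  (forall (x : M) (y : M), dist x y <= 1) /\
  (forall u : nat -> M, cauchy u -> converges u).

(* operations 1-Lipschitz (in each argument, i.e. w.r.t. the sum metric) *)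
Definition lip2 (f : M -> M -> M) : Prop :=
  forall (x : M) (x' : M) (y : M) (y' : M), dist (f x y) (f x' y') <= dist x x' + dist y y'.
Definition ops_lipschitz : Prop :=
  lip2 add /\ lip2 mul /\ lip2 meet /\ lip2 join.

(* (A1) identities of the nonnegative part of a lattice-ordered commutative
   ring with identity *)
Definition A1 : Prop :=
  (forall (x : M) (y : M) (z : M), add x (add y z) = add (add x y) z) /\
  (forall (x : M) (y : M), add x y = add y x) /\
  (forall (x : M), add zero x = x) /\
  (forall (x : M) (y : M) (z : M), mul x (mul y z) = mul (mul x y) z) /\
  (forall (x : M) (y : M), mul x y = mul y x) /\
  (forall (x : M), mul one x = x) /\
  (forall (x : M), mul zero x = zero) /\
  (forall (x : M) (y : M) (z : M), mul x (add y z) = add (mul x y) (mul x z)) /\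
  (forall (x : M) (y : M) (z : M), meet x (meet y z) = meet (meet x y) z) /\
  (forall (x : M) (y : M), meet x y = meet y x) /\
  (forall (x : M) (y : M) (z : M), join x (join y z) = join (join x y) z) /\
  (forall (x : M) (y : M), join x y = join y x) /\
  (forall (x : M) (y : M), meet x (join x y) = x) /\
  (forall (x : M) (y : M), join x (meet x y) = x) /\
  (* the lattice of an l-ring is distributive *)
  (forall (x : M) (y : M) (z : M), meet x (join y z) = join (meet x y) (meet x z)) /\
  (forall (x : M) (y : M) (z : M), add x (meet y z) = meet (add x y) (add x z)) /\
  (forall (x : M) (y : M) (z : M), add x (join y z) = join (add x y) (add x z)) /\
  (forall (x : M) (y : M) (z : M), mul x (meet y z) = meet (mul x y) (mul x z)) /\
  (forall (x : M) (y : M) (z : M), mul x (join y z) = join (mul x y) (mul x z)) /\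
  (forall (x : M), le zero x).

Definition AA0_axioms : Prop :=
  A1 /\
  (forall (x : M), is_inf (fun y => dist x (add (meet x y) one)) (1 - nrm x)) /\
  (forall (x : M), le x (mul x x)) /\
  (forall (x : M) (y : M) (z : M), dist (add x z) (add y z) = dist x y) /\
  (forall (x : M) (y : M) (z : M), dist y z <= dist (mul x y) (mul x z) + 1 - nrm x) /\
  (forall (n : nat) (x : M) (y : M) (z : M), (1 <= n)%nat ->
     dist (mul x y) (mul x z) = dist (mul (npow n x) y) (mul (npow n x) z) /\
     dist (mul (npow n x) y) (mul (npow n x) z) <= dist y z) /\
  (forall (n : nat) (x : M) (y : M), (1 <= n)%nat ->
     dist (nsum n x) (nsum n y) = dist x y /\ dist (npow n x) (npow n y) = dist x y) /\
  (forall (x : M) (y : M), nrm (meet x y) + nrm (join x y) = nrm x + nrm y) /\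
  (forall (x : M) (y : M) (z : M), nrm (add (mul x y) z) = nrm (add (meet x y) z)) /\
  (forall (x : M) (y : M) (z : M), nrm (add (add x y) z) = nrm (add (join x y) z)) /\
  (forall (x : M) (y : M), is_inf (fun t => dist (add (meet x y) t) y) 0).

Definition models_AA0 : Prop :=
  complete_metric_diam1 /\ ops_lipschitz /\ AA0_axioms.

End Defs.

(* Translation by x is an isometry (A3 and commutativity), so it is
   injective, which gives uniqueness, and its range is closed in the complete
   space M. Axiom A10 says that y is in the closure of the range of translation
   by x /\ y, which is translation by x when x <= y; hence y = x + t for some t.
   Conversely x + t dominates x because 0 <= t and + distributes over /\. *)

From Pilot Require Import Defs.
From Stdlib Require Import Reals Lra IndefiniteDescription.

Lemma inv_INR_succ_lt (e : R) :
  0 < e -> exists N : nat, forall n : nat, (N <= n)%nat -> / (INR n + 1) < e.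
Proof.
  intros He.
  destruct (archimed_cor1 e He) as [N [HN HN0]].
  exists N; intros n Hn.
  apply le_INR in Hn; apply lt_0_INR in HN0.
  apply Rle_lt_trans with (/ INR N); [|exact HN].
  apply Rinv_le_contravar; lra.
Qed.

Section CompleteMetric.

Variable M : LStruct.
Hypothesis HM : complete_metric_diam1 M.

Definition isometry (f : M -> M) : Prop :=
  forall a b : M, Defs.dist (f a) (f b) = Defs.dist a b.

Lemma isometry_inj (f : M -> M) : isometry f -> forall a b, f a = f b -> a = b.
Proof.
  destruct HM as (_ & Deq & _).
  intros Hf a b Hab.
  apply Deq; rewrite <- Hf, Hab; apply Deq; reflexivity.
Qed.

Lemma isometry_approx_cauchy (f : M -> M) (y : M) (u : nat -> M) :
  isometry f -> (forall n, Defs.dist (f (u n)) y < / (INR n + 1)) -> cauchy M u.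
Proof.
  destruct HM as (_ & _ & Dsym & Dtri & _).
  intros Hf Hu e He.
  destruct (inv_INR_succ_lt (e / 2)) as [N HN]; [lra|].
  exists N; intros m n Hm Hn.
  rewrite <- Hf.
  pose proof (Dtri (f (u m)) y (f (u n))) as Htri.
  rewrite (Dsym y) in Htri.
  pose proof (Hu m); pose proof (Hu n); pose proof (HN m Hm); pose proof (HN n Hn).
  lra.
Qed.

Lemma isometry_range_closed (f : M -> M) (y : M) :
  isometry f -> (forall e, 0 < e -> exists t, Defs.dist (f t) y < e) ->
  exists t, f t = y.
Proof.
  intros Hf Happrox.
  destruct (functional_choice (fun n t => Defs.dist (f t) y < / (INR n + 1)))
    as [u Hu].
  { intros n; apply Happrox, Rinv_0_lt_compat.
    pose proof (pos_INR n); lra. }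
  destruct HM as (Dpos & Deq & Dsym & Dtri & _ & Dcomp).
  destruct (Dcomp u (isometry_approx_cauchy f y u Hf Hu)) as [l Hl].
  exists l; apply Deq.
  destruct (Rle_lt_or_eq_dec _ _ (Dpos (f l) y)) as [Hlt|]; [exfalso|lra].
  set (e := Defs.dist (f l) y) in *.
  destruct (Hl (e / 2)) as [N1 HN1]; [lra|].
  destruct (inv_INR_succ_lt (e / 2)) as [N2 HN2]; [lra|].
  set (n := Nat.max N1 N2).
  pose proof (HN1 n (Nat.le_max_l _ _)); pose proof (HN2 n (Nat.le_max_r _ _)).
  pose proof (Hu n).
  pose proof (Dtri (f l) (f (u n)) y) as Htri.
  rewrite Hf, (Dsym l) in Htri; fold e in Htri.
  lra.
Qed.

End CompleteMetric.

Section AA0.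

Variable M : LStruct.
Hypothesis HM : models_AA0 M.

Lemma AA0_addC (a b : M) : add a b = add b a.
Proof. destruct HM as (_ & _ & (_ & addC & _) & _); apply addC. Qed.

Lemma AA0_add0r (a : M) : add a zero = a.
Proof.
  destruct HM as (_ & _ & (_ & _ & add0 & _) & _).
  rewrite AA0_addC; apply add0.
Qed.

Lemma AA0_addr_meet (a b c : M) : add a (meet b c) = meet (add a b) (add a c).
Proof.
  destruct HM as (_ & _ & (_ & _ & _ & _ & _ & _ & _ & _ & _ & _ & _ & _ & _ & _
                         & _ & addr_meet & _) & _).
  apply addr_meet.
Qed.

Lemma AA0_le0x (a : M) : le M zero a.
Proof.
  destruct HM as (_ & _ & (_ & _ & _ & _ & _ & _ & _ & _ & _ & _ & _ & _ & _ & _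
                         & _ & _ & _ & _ & _ & le0x) & _).
  apply le0x.
Qed.

Lemma AA0_add_isometry (x : M) : isometry M (add x).
Proof.
  destruct HM as (_ & _ & _ & _ & _ & A3 & _).
  intros a b; rewrite (AA0_addC x a), (AA0_addC x b); apply A3.
Qed.

Lemma le_addr (x t : M) : le M x (add x t).
Proof.
  unfold le.
  rewrite <- (AA0_add0r x) at 1.
  rewrite <- AA0_addr_meet, (AA0_le0x t).
  apply AA0_add0r.
Qed.

Lemma le_exists_addr (x y : M) : le M x y -> exists t, add x t = y.
Proof.
  intros Hle.
  destruct HM as (Hmetric & _ & _ & _ & _ & _ & _ & _ & _ & _ & _ & _ & A10).
  apply (isometry_range_closed M Hmetric _ _ (AA0_add_isometry x)).
  destruct (A10 x y) as [_ Hinf].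
  unfold le in Hle; rewrite Hle in Hinf.
  intros e He; destruct (Hinf e He) as [t Ht].
  exists t; lra.
Qed.

End AA0.

Theorem mainTheorem18 (M : LStruct) (HM : models_AA0 M) (x y : M) :
  (le M x y <-> exists t : M, add x t = y) /\
  (forall t t' : M, add x t = y -> add x t' = y -> t = t').
Proof.
  split; [split|].
  - apply le_exists_addr, HM.
  - intros [t <-]; apply le_addr, HM.
  - intros t t' <- Ht'.
    apply (isometry_inj M (proj1 HM) _ (AA0_add_isometry M HM x)).
    symmetry; exact Ht'.
Qed.
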